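(* Let $\{X_k\}_{k=0}^{N-1}$ be square random matrices and $\{y_k\}_{k=0}^{N-1}$ random vectors of compatible dimension, both with bounded second moments, and let $\{F_k\}_{k=0}^{N-1}$ be deterministic matrices of compatible dimensions. Suppose that $\mathbb E[X_k]=0$ for all $k$, that $X_k$ and $X_l$ are independent for $k\neq l$, and that $X_k$ and $y_l$ are independent whenever $k\ge l$. Then $$\mathbb E\Big[\Big\|\sum_{k=0}^{N-1}F_kX_ky_k\Big\|^2\Big]\le\sum_{k=0}^{N-1}\|F_k\|^2\,\mathbb E[\|X_k\|^2]\,\mathbb E[\|y_k\|^2].$$
   Context: $\|\cdot\|$ denotes the Euclidean norm for vectors and the spectral norm for matrices. *)

From HB Require Import structures.
From mathcomp Require Import all_boot all_order all_algebra.
From mathcomp Require Import all_classical all_reals all_analysis.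
Set Implicit Arguments. Unset Strict Implicit. Unset Printing Implicit Defensive.
Import Order.TTheory GRing.Theory Num.Theory.
Import numFieldNormedType.Exports.
Local Open Scope classical_set_scope.
Local Open Scope ring_scope.

Definition vnorm (R : realType) (n : nat) (v : 'cV[R]_n) : R :=
  Num.sqrt (\sum_(i < n) v i 0 ^+ 2).

Definition mnorm (R : realType) (m n : nat) (A : 'M[R]_(m, n)) : R :=
  sup [set vnorm (A *m v) | v in [set v : 'cV[R]_n | vnorm v <= 1]].

Definition preimg_sets (T : Type) (R : realType) (f : T -> R) : set (set T) :=
  [set f @^-1` B | B in [set B : set R | measurable B]].

Definition indep_gen d (T : measurableType d) (R : realType)
  (P : probability T R) (G1 G2 : set (set T)) : Prop :=
  forall A B, <<s G1 >> A -> <<s G2 >> B ->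
    P (A `&` B) = (P A * P B)%E.

From HB Require Import structures.
From mathcomp Require Import all_boot all_order all_algebra.
From mathcomp Require Import all_classical all_reals all_analysis.
From mathcomp Require Import measurable_realfun ring lra.
Import Order.TTheory GRing.Theory Num.Theory.
Import numFieldNormedType.Exports HBNNSimple.
Set Implicit Arguments.
Unset Strict Implicit.
Unset Printing Implicit Defensive.
Local Open Scope classical_set_scope.
Local Open Scope ring_scope.

(* Write Z_k := F_k X_k y_k. For k < l the matrix X_l is independent of
   (X_k, y_k, y_l) and centred, so E[Z_k^T Z_l] = E[(F_l^T Z_k)^T E[X_l] y_l] = 0:
   the cross terms of E|sum_k Z_k|^2 vanish. Then |Z_k| <= |F_k| |X_k y_k|, and by
   independence of X_k and y_k, E|X_k y_k|^2 = E[y_k^T M_k y_k] with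
   M_k := E[X_k^T X_k], while v^T M_k v = E|X_k v|^2 <= E|X_k|^2 |v|^2.
   The product rule E[f g] = E[f] E[g] for f, g measurable with respect to
   independent sigma-algebras is obtained by approximating nonnegative f and g by
   simple functions that are measurable with respect to the same sigma-algebras. *)

Local Notation Rintegrable mu f := (mu.-integrable setT (EFin \o f)).

Section vector_matrix_norms.
Context {R : realType}.

Lemma vnorm_ge0 n (v : 'cV[R]_n) : 0 <= vnorm v.
Proof. exact: sqrtr_ge0. Qed.

Lemma vnorm_sqr n (v : 'cV[R]_n) : vnorm v ^+ 2 = \sum_i v i 0 ^+ 2.
Proof. by rewrite sqr_sqrtr// sumr_ge0// => i _; exact: sqr_ge0. Qed.

Lemma vnorm_sqr_mx n (v : 'cV[R]_n) : vnorm v ^+ 2 = (v^T *m v) 0 0.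
Proof. by rewrite vnorm_sqr mxE; apply: eq_bigr => i _; rewrite mxE expr2. Qed.

Lemma dotmxC n (u v : 'cV[R]_n) : (u^T *m v) 0 0 = (v^T *m u) 0 0.
Proof. by rewrite !mxE; apply: eq_bigr => i _; rewrite !mxE mulrC. Qed.

Lemma vnorm_sum_sqr (I : finType) n (v : I -> 'cV[R]_n) :
  vnorm (\sum_i v i) ^+ 2 = \sum_i \sum_j ((v i)^T *m v j) 0 0.
Proof.
rewrite vnorm_sqr_mx [_^T]linear_sum mulmx_suml summxE; apply: eq_bigr => i _.
by rewrite mulmx_sumr summxE.
Qed.

Lemma vnorm_mulmx_sqr m n (A : 'M[R]_(m, n)) v :
  vnorm (A *m v) ^+ 2 = (v^T *m (A^T *m A) *m v) 0 0.
Proof. by rewrite vnorm_sqr_mx trmx_mul !mulmxA. Qed.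

Lemma normr_coord_le_vnorm n (v : 'cV[R]_n) i : `|v i 0| <= vnorm v.
Proof.
rewrite -sqrtr_sqr ler_sqrt ?sumr_ge0// => [|j _]; last exact: sqr_ge0.
by rewrite (bigD1 i)//= lerDl sumr_ge0// => j _; exact: sqr_ge0.
Qed.

Lemma vnormZ n c (v : 'cV[R]_n) : vnorm (c *: v) = `|c| * vnorm v.
Proof.
rewrite /vnorm (eq_bigr (fun i => c ^+ 2 * v i 0 ^+ 2)) => [|i _]; last first.
  by rewrite mxE exprMn.
by rewrite -mulr_sumr sqrtrM ?sqr_ge0// sqrtr_sqr.
Qed.

Lemma vnorm0 n : vnorm (0 : 'cV[R]_n) = 0.
Proof. by rewrite /vnorm big1 ?sqrtr0// => i _; rewrite mxE expr0n. Qed.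

Lemma vnorm_eq0 n (v : 'cV[R]_n) : (vnorm v == 0) = (v == 0).
Proof.
apply/eqP/eqP => [v0|->]; last exact: vnorm0.
apply/matrixP => i j; rewrite ord1 mxE; apply/normr0_eq0/eqP.
by rewrite eq_le normr_ge0 andbT -v0 normr_coord_le_vnorm.
Qed.

Lemma mnorm_has_ubound m n (A : 'M[R]_(m, n)) :
  has_ubound [set vnorm (A *m v) | v in [set v : 'cV[R]_n | vnorm v <= 1]].
Proof.
exists (Num.sqrt (\sum_i (\sum_j `|A i j|) ^+ 2)) => _ [v /= v1 <-].
rewrite ler_sqrt ?sumr_ge0// => [|i _]; last exact: sqr_ge0.
apply: ler_sum => i _; rewrite mxE -[leLHS]real_normK ?num_real//.
apply: lerXn2r; rewrite ?nnegrE ?sumr_ge0//.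
apply: le_trans (ler_norm_sum _ _ _) _; apply: ler_sum => j _.
by rewrite normrM ler_piMr// (le_trans (normr_coord_le_vnorm v j) v1).
Qed.

Lemma mnorm_ub m n (A : 'M[R]_(m, n)) v : vnorm v <= 1 -> vnorm (A *m v) <= mnorm A.
Proof. by move=> v1; apply: ub_le_sup (mnorm_has_ubound A) _ _; exists v. Qed.

Lemma mnorm_ge0 m n (A : 'M[R]_(m, n)) : 0 <= mnorm A.
Proof.
apply: le_trans (vnorm_ge0 (A *m 0)) (mnorm_ub A _).
by rewrite vnorm0 ler01.
Qed.

Lemma vnorm_mulmx_le m n (A : 'M[R]_(m, n)) v : vnorm (A *m v) <= mnorm A * vnorm v.
Proof.
have [/eqP v0|v0] := eqVneq (vnorm v) 0.
  by move: v0; rewrite vnorm_eq0 => /eqP->; rewrite mulmx0 !vnorm0 mulr0.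
have /(mnorm_ub A) : vnorm ((vnorm v)^-1 *: v) <= 1.
  by rewrite vnormZ ger0_norm ?invr_ge0 ?vnorm_ge0// mulVf.
rewrite -scalemxAr vnormZ ger0_norm ?invr_ge0 ?vnorm_ge0// mulrC.
by rewrite ler_pdivrMr ?lt_def ?v0 ?vnorm_ge0.
Qed.

Lemma normr_entry_le_mnorm m n (A : 'M[R]_(m, n)) i j : `|A i j| <= mnorm A.
Proof.
have ej : vnorm (delta_mx j 0 : 'cV[R]_n) = 1.
  rewrite /vnorm (bigD1 j)//= big1 => [|k kj]; last by rewrite mxE (negbTE kj) expr0n.
  by rewrite mxE !eqxx expr1n addr0 sqrtr1.
have := mnorm_ub A (v := delta_mx j 0); rewrite ej lexx => /(_ isT).
apply: le_trans; apply: le_trans (normr_coord_le_vnorm _ i).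
rewrite mxE (bigD1 j)//= big1 ?addr0 => [|k kj]; last by rewrite mxE (negbTE kj) mulr0.
by rewrite mxE !eqxx mulr1.
Qed.

Lemma bilinear_mulmxE (p q : nat) (u : 'rV[R]_p) (A : 'M[R]_(p, q)) (v : 'cV[R]_q) :
  (u *m A *m v) 0 0 = \sum_i \sum_j A i j * (u 0 i * v j 0).
Proof.
rewrite mxE; under eq_bigr do rewrite mxE big_distrl.
rewrite exchange_big; apply: eq_bigr => i _; apply: eq_bigr => j _ /=.
by rewrite mulrCA mulrA.
Qed.

End vector_matrix_norms.

Section Rintegral_lemmas.
Context {d} {T : measurableType d} {R : realType} (mu : {measure set T -> \bar R}).

Lemma Rintegrable_le (f g : T -> R) : measurable_fun setT f -> Rintegrable mu g ->
  (forall t, `|f t| <= g t) -> Rintegrable mu f.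
Proof.
move=> mf ig fg; apply: le_integrable ig => //; first exact/measurable_EFinP.
by move=> t _ /=; rewrite lee_fin (le_trans (fg t)) ?ler_norm.
Qed.

Lemma RintegrableZl c (f : T -> R) : Rintegrable mu f -> Rintegrable mu (fun t => c * f t).
Proof.
by move=> fi; apply: eq_integrable (integrableZl measurableT c fi).
Qed.

Lemma RintegrableB (f g : T -> R) : Rintegrable mu f -> Rintegrable mu g ->
  Rintegrable mu (fun t => f t - g t).
Proof.
by move=> fi gi; apply: eq_integrable (integrableB measurableT fi gi) => // t _;
  rewrite /= EFinB.
Qed.

Lemma Rintegrable_sum I (s : seq I) (f : I -> T -> R) :
  (forall i, Rintegrable mu (f i)) -> Rintegrable mu (fun t => \sum_(i <- s) f i t).
Proof.
move=> fi; apply: eq_integrable (integrable_sum measurableT s (fun i _ => fi i)) => // t _.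
by rewrite /= sumEFin.
Qed.

Lemma Rintegral_sum I (s : seq I) (f : I -> T -> R) : (forall i, Rintegrable mu (f i)) ->
  \int[mu]_t (\sum_(i <- s) f i t) = \sum_(i <- s) \int[mu]_t f i t.
Proof.
move=> fi; elim: s => [|i s IH].
  by under eq_Rintegral do rewrite big_nil; rewrite big_nil Rintegral_cst// mul0r.
under eq_Rintegral do rewrite big_cons.
by rewrite RintegralD ?big_cons ?IH//; exact: Rintegrable_sum.
Qed.

Lemma Rintegral_EFin (f : T -> R) : Rintegrable mu f ->
  (\int[mu]_t (f t)%:E)%E = (\int[mu]_t f t)%:E.
Proof. by move=> fi; rewrite fineK// integrable_fin_num. Qed.

Lemma Rintegrable_funrpos (f : T -> R) : Rintegrable mu f -> Rintegrable mu f^\+.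
Proof. by move=> fi; rewrite -funerpos; exact: integrable_funepos. Qed.

Lemma Rintegrable_funrneg (f : T -> R) : Rintegrable mu f -> Rintegrable mu f^\-.
Proof. by move=> fi; rewrite -funerneg; exact: integrable_funeneg. Qed.

Lemma Rintegral_funrposneg (f : T -> R) : Rintegrable mu f ->
  \int[mu]_t f t = \int[mu]_t f^\+ t - \int[mu]_t f^\- t.
Proof.
move=> fi; rewrite -(RintegralB measurableT (Rintegrable_funrpos fi) (Rintegrable_funrneg fi)).
by apply: eq_Rintegral => t _; rewrite -[in LHS](funrposBneg f).
Qed.

(* No measurability is needed: both sides are suprema over simple minorants. *)
Lemma ge0_le_integral_nomeas (f g : T -> \bar R) : (forall t, 0 <= f t)%E ->
  (forall t, f t <= g t)%E -> (\int[mu]_t f t <= \int[mu]_t g t)%E.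
Proof.
move=> f0 fg; have g0 t : (0 <= g t)%E := le_trans (f0 t) (fg t).
rewrite (ge0_integralTE _ f0) (ge0_integralTE _ g0).
by apply: ereal_sup_le => _ [h hf <-]; exists h => //= t; exact: le_trans (hf t) (fg t).
Qed.

Lemma cvg_integral_nd (h : nat -> T -> R) (l : T -> R) :
  (forall n, measurable_fun setT (h n)) -> (forall n t, 0 <= h n t) ->
  (forall t, nondecreasing_seq (h ^~ t)) -> (forall t, h ^~ t @ \oo --> l t) ->
  (\int[mu]_t (h n t)%:E @[n --> \oo] --> \int[mu]_t (l t)%:E)%E.
Proof.
move=> mh h0 nd hl.
have <- : (fun t => limn (fun n => (h n t)%:E)) = (fun t => (l t)%:E).
  by apply/funext => t; apply/cvg_lim => //; apply: cvg_EFin (hl t); exact: nearW.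
apply: (@cvg_monotone_convergence _ _ _ mu _ measurableT (fun n t => (h n t)%:E)).
- by move=> n; exact/measurable_EFinP.
- by move=> n t _; rewrite lee_fin.
- by move=> t _ n k nk; rewrite lee_fin nd.
Qed.

End Rintegral_lemmas.

Section square_integrable.
Context {d} {T : measurableType d} {R : realType} (mu : {finite_measure set T -> \bar R}).

Lemma Rintegrable_cst (c : R) : Rintegrable mu (fun=> c).
Proof. exact: finite_measure_integrable_cst. Qed.

Definition square_integrable (f : T -> R) :=
  measurable_fun setT f /\ Rintegrable mu (fun t => f t ^+ 2).


Lemma square_integrable_le (f g : T -> R) : measurable_fun setT f ->
  (forall t, `|f t| <= g t) -> (\int[mu]_t (g t ^+ 2)%:E < +oo)%E -> square_integrable f.
Proof.
move=> mf fg gi; split => //; apply/integrableP; split.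
  by apply/measurable_EFinP; exact: measurable_funX.
apply: le_lt_trans gi; apply: ge0_le_integral_nomeas => t; rewrite /= lee_fin//.
rewrite ger0_norm ?sqr_ge0// -real_normK ?num_real// ler_sqr ?nnegrE//.
exact: le_trans (normr_ge0 _) (fg t).
Qed.

Lemma square_integrable_mul (f g : T -> R) : square_integrable f -> square_integrable g ->
  Rintegrable mu (fun t => f t * g t).
Proof.
move=> [mf f2] [mg g2]; apply: Rintegrable_le (integrableD measurableT f2 g2) _ => //.
  exact: measurable_funM.
move=> t; rewrite normrM -[f t ^+ 2]real_normK ?num_real// -[g t ^+ 2]real_normK ?num_real//.
by have := normr_ge0 (f t); have := normr_ge0 (g t); nra.
Qed.

Lemma square_integrable_cst c : square_integrable (fun=> c).
Proof. by split; [exact: measurable_cst | exact: Rintegrable_cst]. Qed.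

Lemma square_integrable_integrable f : square_integrable f -> Rintegrable mu f.
Proof.
move=> fs; apply: eq_integrable (square_integrable_mul fs (square_integrable_cst 1)) => //.
by move=> t _ /=; rewrite mulr1.
Qed.

Lemma square_integrableZ c f : square_integrable f -> square_integrable (fun t => c * f t).
Proof.
move=> [mf f2]; split; first exact: measurable_funM.
by apply: eq_integrable (RintegrableZl (c ^+ 2) f2) => // t _ /=; rewrite exprMn.
Qed.

Lemma square_integrableD f g : square_integrable f -> square_integrable g ->
  square_integrable (fun t => f t + g t).
Proof.
move=> fs gs; split; first exact: measurable_funD fs.1 gs.1.
have fgi := RintegrableZl 2 (square_integrable_mul fs gs).
apply: eq_integrable (integrableD measurableT (integrableD measurableT fs.2 fgi) gs.2) => // t _.
by rewrite /= -!EFinD; congr EFin; ring.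
Qed.

Lemma square_integrable_sum I (s : seq I) (f : I -> T -> R) :
  (forall i, square_integrable (f i)) -> square_integrable (fun t => \sum_(i <- s) f i t).
Proof.
move=> fs; elim: s => [|i s IH].
  by under eq_fun do rewrite big_nil; exact: square_integrable_cst.
by under eq_fun do rewrite big_cons; exact: square_integrableD.
Qed.

Definition mx_square_integrable p q (A : T -> 'M[R]_(p, q)) :=
  forall i j, square_integrable (fun t => A t i j).


Lemma mx_square_integrable_mull p q r (C : 'M[R]_(p, q)) (A : T -> 'M[R]_(q, r)) :
  mx_square_integrable A -> mx_square_integrable (fun t => C *m A t).
Proof.
move=> iA i j; under eq_fun do rewrite mxE.
by apply: square_integrable_sum => k; exact: square_integrableZ.
Qed.

Lemma mx_square_integrable_mulr p q r (A : T -> 'M[R]_(p, q)) (C : 'M[R]_(q, r)) :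
  mx_square_integrable A -> mx_square_integrable (fun t => A t *m C).
Proof.
move=> iA i j; under eq_fun do rewrite mxE.
by apply: square_integrable_sum => k; under eq_fun do rewrite mulrC; exact: square_integrableZ.
Qed.

Lemma mx_square_integrable_sum (I : Type) (s : seq I) p q (A : I -> T -> 'M[R]_(p, q)) :
  (forall k, mx_square_integrable (A k)) ->
  mx_square_integrable (fun t => \sum_(k <- s) A k t).
Proof.
move=> iA i j; under eq_fun do rewrite summxE.
by apply: square_integrable_sum => k; exact: iA.
Qed.

Lemma mx_square_integrable_tr p q (A : T -> 'M[R]_(p, q)) :
  mx_square_integrable A -> mx_square_integrable (fun t => (A t)^T).
Proof. by move=> iA i j; under eq_fun do rewrite mxE; exact: iA. Qed.

Lemma mx_Rintegrable_mul p q r (A : T -> 'M[R]_(p, q)) (B : T -> 'M[R]_(q, r)) :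
  mx_square_integrable A -> mx_square_integrable B ->
  forall i j, Rintegrable mu (fun t => (A t *m B t) i j).
Proof.
move=> iA iB i j; under eq_fun do rewrite mxE.
by apply: Rintegrable_sum => k; exact: square_integrable_mul.
Qed.

Lemma Rintegrable_sqr_vnorm n (v : T -> 'cV[R]_n) :
  mx_square_integrable v -> Rintegrable mu (fun t => vnorm (v t) ^+ 2).
Proof.
move=> iv; under eq_fun do rewrite vnorm_sqr.
by apply: Rintegrable_sum => i; exact: (iv i 0).2.
Qed.

Lemma Rintegrable_mx_bilinear p q (u : T -> 'rV[R]_p) (M : 'M[R]_(p, q)) (v : T -> 'cV[R]_q) :
  mx_square_integrable u -> mx_square_integrable v ->
  Rintegrable mu (fun t => (u t *m M *m v t) 0 0).
Proof.
move=> iu iv; under eq_fun do rewrite bilinear_mulmxE.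
apply: Rintegrable_sum => i; apply: Rintegrable_sum => j.
by apply: RintegrableZl; exact: square_integrable_mul.
Qed.

Definition mexpect p q (A : T -> 'M[R]_(p, q)) : 'M[R]_(p, q) :=
  \matrix_(i, j) \int[mu]_t A t i j.

Lemma mexpect_bilinear p q (u : 'rV[R]_p) (A : T -> 'M[R]_(p, q)) (v : 'cV[R]_q) :
  (forall i j, Rintegrable mu (fun t => A t i j)) ->
  (u *m mexpect A *m v) 0 0 = \int[mu]_t (u *m A t *m v) 0 0.
Proof.
move=> Ai; under eq_Rintegral do rewrite bilinear_mulmxE.
rewrite bilinear_mulmxE Rintegral_sum => [|i]; last first.
  apply: Rintegrable_sum => j; under eq_fun do rewrite mulrC; exact: RintegrableZl.
apply: eq_bigr => i _; rewrite Rintegral_sum => [|j]; last first.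
  by under eq_fun do rewrite mulrC; exact: RintegrableZl.
by apply: eq_bigr => j _; rewrite mxE RintegralZr.
Qed.

End square_integrable.

Section sigma_measurable.
Context {d} {T : measurableType d} {R : realType}.

Definition sigma_measurable (G : set (set T)) (f : T -> R) :=
  measurable_fun (setT : set (g_sigma_algebraType G)) f.

Lemma sigma_measurable_set G (A : set T) : G `<=` measurable ->
  G.-sigma.-measurable A -> measurable A.
Proof. by move=> GT; apply: smallest_sub => //; exact: sigma_algebra_measurable. Qed.

Lemma sigma_measurable_measurable G f : G `<=` measurable ->
  sigma_measurable G f -> measurable_fun setT f.
Proof.
move=> GT mf _ B mB; have := mf measurableT B mB; rewrite !setTI.
exact: sigma_measurable_set.
Qed.

Lemma sigma_measurable_gen G f :
  (forall B, measurable B -> G (f @^-1` B)) -> sigma_measurable G f.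
Proof. by move=> fG _ B mB; rewrite setTI; exact: sub_sigma_algebra (fG B mB). Qed.

(* Approximating on [g_sigma_algebraType G] keeps the level sets of the
   approximants in [<<s G >>]. *)
Lemma sigma_measurable_approx G (f : T -> R) : sigma_measurable G f ->
  (forall t, 0 <= f t) ->
  exists h : {nnsfun g_sigma_algebraType G >-> R}^nat,
    (forall t : g_sigma_algebraType G, nondecreasing_seq (fun n => h n t)) /\
    (forall t : g_sigma_algebraType G, h n t @[n --> \oo] --> f t).
Proof.
move=> mf f0; have mEf : measurable_fun (setT : set (g_sigma_algebraType G)) (EFin \o f).
  exact/measurable_EFinP.
exists (nnsfun_approx measurableT mEf); split => t.
  by move=> n k nk; have /lefP := nd_nnsfun_approx measurableT mEf nk; apply.
have -> : (fun n => nnsfun_approx measurableT mEf n t) = approx setT (EFin \o f) ^~ t.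
  by apply/funext => n; rewrite nnsfun_approxE.
by apply: cvg_approx => [x _||]; rewrite ?lee_fin ?ltry.
Qed.

Definition mx_sigma_measurable G p q (A : T -> 'M[R]_(p, q)) :=
  forall i j, sigma_measurable G (fun t => A t i j).

Lemma mx_sigma_measurable_cst G p q (C : 'M[R]_(p, q)) : mx_sigma_measurable G (fun=> C).
Proof. by move=> i j; exact: measurable_cst. Qed.

Lemma mx_sigma_measurable_tr G p q (A : T -> 'M[R]_(p, q)) :
  mx_sigma_measurable G A -> mx_sigma_measurable G (fun t => (A t)^T).
Proof. by move=> mA i j; under eq_fun do rewrite mxE; exact: mA. Qed.

Lemma mx_sigma_measurable_mul G p q r (A : T -> 'M[R]_(p, q)) (B : T -> 'M[R]_(q, r)) :
  mx_sigma_measurable G A -> mx_sigma_measurable G B ->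
  mx_sigma_measurable G (fun t => A t *m B t).
Proof.
move=> mA mB i j; under eq_fun do rewrite mxE.
by apply: measurable_sum => k; apply: measurable_funM; [exact: mA | exact: mB].
Qed.

End sigma_measurable.

Section independence.
Context {d} {T : measurableType d} {R : realType} (P : probability T R).

Lemma integral_sum_indic (I : finType) (a : I -> R) (A : I -> set T) :
  (forall i, measurable (A i)) ->
  (\int[P]_t (\sum_i a i * \1_(A i) t)%:E = \sum_i (a i)%:E * P (A i))%E.
Proof.
move=> mA; have aAi i : P.-integrable setT (fun t => (a i * \1_(A i) t)%:E).
  exact: eq_integrable (integrableZl measurableT (a i) (integrable_indic _ (mA i))).
under eq_integral do rewrite -sumEFin.
rewrite (integral_sum measurableT aAi); apply: eq_bigr => i _; under eq_integral do rewrite EFinM.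
by rewrite integralZl ?integral_indic ?setIT//; exact: integrable_indic.
Qed.

Variables (G1 G2 : set (set T)).
Hypotheses (G1m : G1 `<=` measurable) (G2m : G2 `<=` measurable).
Hypothesis G12 : indep_gen P G1 G2.

Lemma integral_indep_indic_sum (I J : finType) (a : I -> R) (A : I -> set T)
    (b : J -> R) (B : J -> set T) :
  (forall i, G1.-sigma.-measurable (A i)) -> (forall j, G2.-sigma.-measurable (B j)) ->
  (\int[P]_t ((\sum_i a i * \1_(A i) t) * (\sum_j b j * \1_(B j) t))%:E =
   \int[P]_t (\sum_i a i * \1_(A i) t)%:E * \int[P]_t (\sum_j b j * \1_(B j) t)%:E)%E.
Proof.
move=> sA sB.
have mA i : measurable (A i) := sigma_measurable_set G1m (sA i).
have mB j : measurable (B j) := sigma_measurable_set G2m (sB j).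
transitivity (\int[P]_t (\sum_(ij : I * J)
    (a ij.1 * b ij.2) * \1_(A ij.1 `&` B ij.2) t)%:E)%E.
  apply: eq_integral => t _; congr EFin; rewrite big_distrlr pair_big.
  by apply: eq_bigr => -[i j] _; rewrite indicI mulrACA.
rewrite !integral_sum_indic// => [|ij]; last exact: measurableI.
pose p X := fine (P X).
have PE X : measurable X -> P X = (p X)%:E.
  by move=> mX; rewrite /p fineK ?fin_num_measure.
have PAB i j : P (A i `&` B j) = (p (A i) * p (B j))%:E.
  by rewrite (G12 (sA i) (sB j)) (PE _ (mA i)) (PE _ (mB j)).
under eq_bigr => ij _ do rewrite PAB -EFinM.
under [X in (X * _)%E]eq_bigr => i _ do rewrite (PE _ (mA _)) -EFinM.
under [X in (_ * X)%E]eq_bigr => j _ do rewrite (PE _ (mB _)) -EFinM.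
rewrite !sumEFin -EFinM big_distrlr pair_big; congr EFin.
by apply: eq_bigr => -[i j] _; rewrite mulrACA.
Qed.

Lemma integral_indep_nnsfun (f : {nnsfun g_sigma_algebraType G1 >-> R})
    (g : {nnsfun g_sigma_algebraType G2 >-> R}) :
  (\int[P]_t (f t * g t)%:E = \int[P]_t (f t)%:E * \int[P]_t (g t)%:E)%E.
Proof.
set sf := finmap.enum_fset (fset_set (range f)).
set sg := finmap.enum_fset (fset_set (range g)).
have -> : (f : T -> R) = fun t => \sum_(i < size sf) sf`_i * \1_(f @^-1` [set sf`_i]) t.
  by apply/funext => t; exact: fimfunEord.
have -> : (g : T -> R) = fun t => \sum_(i < size sg) sg`_i * \1_(g @^-1` [set sg`_i]) t.
  by apply/funext => t; exact: fimfunEord.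
by apply: integral_indep_indic_sum => i; exact: measurable_funPTI.
Qed.

Lemma integral_indep_ge0 (f g : T -> R) :
  sigma_measurable G1 f -> sigma_measurable G2 g ->
  (forall t, 0 <= f t) -> (forall t, 0 <= g t) ->
  (\int[P]_t (f t)%:E < +oo)%E -> (\int[P]_t (g t)%:E < +oo)%E ->
  (\int[P]_t (f t * g t)%:E = \int[P]_t (f t)%:E * \int[P]_t (g t)%:E)%E.
Proof.
move=> mf mg f0 g0 fi gi.
have [fn [ndf cvgf]] := sigma_measurable_approx mf f0.
have [gn [ndg cvgg]] := sigma_measurable_approx mg g0.
have mfn n : measurable_fun setT (fn n : T -> R).
  exact: sigma_measurable_measurable G1m (measurable_funPT (fn n)).
have mgn n : measurable_fun setT (gn n : T -> R).
  exact: sigma_measurable_measurable G2m (measurable_funPT (gn n)).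
have fn_cvg := cvg_integral_nd (mu := P) mfn (fun n t => @fun_ge0 _ _ (fn n) t) ndf cvgf.
have gn_cvg := cvg_integral_nd (mu := P) mgn (fun n t => @fun_ge0 _ _ (gn n) t) ndg cvgg.
have fgn_cvg : (\int[P]_t (fn n t * gn n t)%:E @[n --> \oo] -->
    \int[P]_t (f t * g t)%:E)%E.
  apply: cvg_integral_nd => [n|n t|t n k nk|t]; first exact: measurable_funM.
  - exact: mulr_ge0.
  - by apply: ler_pM => //; [exact: ndf | exact: ndg].
  - exact: cvgM.
have fin h : (forall t, 0 <= h t) -> (\int[P]_t (h t)%:E < +oo)%E ->
    (\int[P]_t (h t)%:E)%E \is a fin_num.
  by move=> h0 hi; rewrite ge0_fin_numE// integral_ge0// => t _; rewrite lee_fin.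
apply: (cvg_unique _ fgn_cvg); first exact: ereal_hausdorff.
have -> : (fun n => \int[P]_t (fn n t * gn n t)%:E)%E =
    (fun n => \int[P]_t (fn n t)%:E * \int[P]_t (gn n t)%:E)%E.
  by apply/funext => n; exact: integral_indep_nnsfun.
exact: cvgeM (mule_def_fin (fin _ f0 fi) (fin _ g0 gi)) fn_cvg gn_cvg.
Qed.

Lemma Rintegral_indep_ge0 (f g : T -> R) :
  sigma_measurable G1 f -> sigma_measurable G2 g ->
  (forall t, 0 <= f t) -> (forall t, 0 <= g t) -> Rintegrable P f -> Rintegrable P g ->
  Rintegrable P (fun t => f t * g t) /\
  \int[P]_t (f t * g t) = \int[P]_t f t * \int[P]_t g t.
Proof.
move=> mf mg f0 g0 fi gi.
have := integral_indep_ge0 mf mg f0 g0 (integrable_lty measurableT fi)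
  (integrable_lty measurableT gi).
rewrite (Rintegral_EFin fi) (Rintegral_EFin gi) -EFinM => fg.
split; last by rewrite /Rintegral fg.
apply/integrableP; split.
  apply/measurable_EFinP; apply: measurable_funM.
  - exact: sigma_measurable_measurable G1m mf.
  - exact: sigma_measurable_measurable G2m mg.
under eq_integral do rewrite /= ger0_norm ?mulr_ge0//.
by rewrite fg ltry.
Qed.

Lemma Rintegral_indep (f g : T -> R) :
  sigma_measurable G1 f -> sigma_measurable G2 g -> Rintegrable P f -> Rintegrable P g ->
  Rintegrable P (fun t => f t * g t) /\
  \int[P]_t (f t * g t) = \int[P]_t f t * \int[P]_t g t.
Proof.
move=> mf mg fi gi.
have [fp fn] := (Rintegrable_funrpos fi, Rintegrable_funrneg fi).
have [gp gn] := (Rintegrable_funrpos gi, Rintegrable_funrneg gi).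
have [mfp mfn] := (measurable_funrpos mf, measurable_funrneg mf).
have [mgp mgn] := (measurable_funrpos mg, measurable_funrneg mg).
have [ipp epp] := Rintegral_indep_ge0 mfp mgp (@funrpos_ge0 _ _ f) (@funrpos_ge0 _ _ g) fp gp.
have [ipn epn] := Rintegral_indep_ge0 mfp mgn (@funrpos_ge0 _ _ f) (@funrneg_ge0 _ _ g) fp gn.
have [inp enp] := Rintegral_indep_ge0 mfn mgp (@funrneg_ge0 _ _ f) (@funrpos_ge0 _ _ g) fn gp.
have [inn enn] := Rintegral_indep_ge0 mfn mgn (@funrneg_ge0 _ _ f) (@funrneg_ge0 _ _ g) fn gn.
have -> : (fun t => f t * g t) = fun t =>
    (f^\+ t * g^\+ t - f^\+ t * g^\- t) - (f^\- t * g^\+ t - f^\- t * g^\- t).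
  apply/funext => t; have fE : f t = f^\+ t - f^\- t by rewrite -{1}(funrposBneg f).
  have gE : g t = g^\+ t - g^\- t by rewrite -{1}(funrposBneg g).
  by rewrite fE gE; ring.
split; first by do !apply: RintegrableB.
rewrite !RintegralB; try by do ?apply: RintegrableB.
by rewrite epp epn enp enn (Rintegral_funrposneg fi) (Rintegral_funrposneg gi); ring.
Qed.

Lemma square_integrable_indep_mul (f g : T -> R) :
  sigma_measurable G1 f -> sigma_measurable G2 g ->
  square_integrable P f -> square_integrable P g -> square_integrable P (fun t => f t * g t).
Proof.
move=> mf mg [_ f2] [_ g2]; split.
  apply: measurable_funM.
  - exact: sigma_measurable_measurable G1m mf.
  - exact: sigma_measurable_measurable G2m mg.
have [] := Rintegral_indep (measurable_funX 2 mf) (measurable_funX 2 mg) f2 g2.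
by under eq_fun do rewrite -exprMn.
Qed.

Lemma mx_square_integrable_indep_mul p q r (A : T -> 'M[R]_(p, q)) (B : T -> 'M[R]_(q, r)) :
  mx_sigma_measurable G1 A -> mx_sigma_measurable G2 B ->
  mx_square_integrable P A -> mx_square_integrable P B ->
  mx_square_integrable P (fun t => A t *m B t).
Proof.
move=> mA mB iA iB i j; under eq_fun do rewrite mxE.
by apply: square_integrable_sum => k; exact: square_integrable_indep_mul.
Qed.

Lemma Rintegral_indep_bilinear p q (A : T -> 'M[R]_(p, q)) (u : T -> 'rV[R]_p)
    (v : T -> 'cV[R]_q) :
  mx_sigma_measurable G1 A -> mx_sigma_measurable G2 u -> mx_sigma_measurable G2 v ->
  (forall i j, Rintegrable P (fun t => A t i j)) ->
  mx_square_integrable P u -> mx_square_integrable P v ->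
  \int[P]_t (u t *m A t *m v t) 0 0 = \int[P]_t (u t *m mexpect P A *m v t) 0 0.
Proof.
move=> mA m_u m_v iA iu iv.
have uv i j : Rintegrable P (fun t => u t 0 i * v t j 0) by exact: square_integrable_mul.
have muv i j : sigma_measurable G2 (fun t => u t 0 i * v t j 0).
  by apply: measurable_funM; [exact: m_u | exact: m_v].
have Auv i j := Rintegral_indep (mA i j) (muv i j) (iA i j) (uv i j).
under eq_Rintegral do rewrite bilinear_mulmxE.
under [RHS]eq_Rintegral do rewrite bilinear_mulmxE.
have lhs i j : Rintegrable P (fun t => A t i j * (u t 0 i * v t j 0)) := (Auv i j).1.
have rhs i j : Rintegrable P (fun t => mexpect P A i j * (u t 0 i * v t j 0)).
  exact: RintegrableZl.
rewrite (Rintegral_sum _ (fun i => Rintegrable_sum _ (lhs i))).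
rewrite (Rintegral_sum _ (fun i => Rintegrable_sum _ (rhs i))).
apply: eq_bigr => i _; rewrite (Rintegral_sum _ (lhs i)) (Rintegral_sum _ (rhs i)).
by apply: eq_bigr => j _; rewrite (Auv i j).2 RintegralZl// mxE.
Qed.

End independence.

Section second_moment.
Variables (d : measure_display) (T : measurableType d) (R : realType)
  (P : probability T R) (N m n : nat)
  (X : 'I_N -> T -> 'M[R]_n) (y : 'I_N -> T -> 'cV[R]_n)
  (F : 'I_N -> 'M[R]_(m, n)).

Definition X_gen (k : 'I_N) : set (set T) :=
  [set A | exists i j, preimg_sets (fun t => X k t i j) A].

Definition rest_gen (k : 'I_N) : set (set T) :=
  [set A | exists (l : 'I_N) i j, l != k /\ preimg_sets (fun t => X l t i j) A]
  `|` [set A | exists (l : 'I_N) i, (l <= k)%N /\ preimg_sets (fun t => y l t i 0) A].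

Hypotheses (mX : forall k i j, measurable_fun setT (fun t => X k t i j))
  (my : forall k i, measurable_fun setT (fun t => y k t i 0))
  (iX : forall k, (\int[P]_t ((mnorm (X k t)) ^+ 2)%:E < +oo)%E)
  (iy : forall k, (\int[P]_t ((vnorm (y k t)) ^+ 2)%:E < +oo)%E)
  (zX : forall k i j, (\int[P]_t (X k t i j)%:E = 0)%E)
  (indep : forall k, indep_gen P (X_gen k) (rest_gen k)).

(* [indep_gen] unfolds to a product, which would otherwise make [k] implicit. *)
Arguments indep : clear implicits.

Local Notation Z k t := (F k *m X k t *m y k t).

Lemma X_gen_measurable k : X_gen k `<=` measurable.
Proof.
move=> _ [i [j [B mB <-]]].
by have := mX k i j measurableT mB; rewrite setTI.
Qed.

Lemma rest_gen_measurable k : rest_gen k `<=` measurable.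
Proof.
move=> _ [[l [i [j [_ [B mB <-]]]]]|[l [i [_ [B mB <-]]]]].
- by have := mX l i j measurableT mB; rewrite setTI.
- by have := my l i measurableT mB; rewrite setTI.
Qed.

Lemma X_sigma_X_gen k : mx_sigma_measurable (X_gen k) (X k).
Proof. by move=> i j; apply: sigma_measurable_gen => B mB; exists i, j, B. Qed.

Lemma X_sigma_rest_gen (k l : 'I_N) : l != k -> mx_sigma_measurable (rest_gen k) (X l).
Proof.
by move=> lk i j; apply: sigma_measurable_gen => B mB; left; exists l, i, j; split => //; exists B.
Qed.

Lemma y_sigma_rest_gen (k l : 'I_N) : (l <= k)%N -> mx_sigma_measurable (rest_gen k) (y l).
Proof.
move=> lk i j; rewrite ord1; apply: sigma_measurable_gen => B mB.
by right; exists l, i; split => //; exists B.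
Qed.

Lemma X_square_integrable k : mx_square_integrable P (X k).
Proof.
move=> i j; apply: square_integrable_le (mX k i j) _ (iX k) => t.
exact: normr_entry_le_mnorm.
Qed.

Lemma y_square_integrable k : mx_square_integrable P (y k).
Proof.
move=> i j; rewrite ord1; apply: square_integrable_le (my k i) _ (iy k) => t.
exact: normr_coord_le_vnorm.
Qed.

Lemma Xy_square_integrable k : mx_square_integrable P (fun t => X k t *m y k t).
Proof.
apply: (mx_square_integrable_indep_mul _ _ (indep k)).
- exact: X_gen_measurable.
- exact: rest_gen_measurable.
- exact: X_sigma_X_gen.
- exact: y_sigma_rest_gen.
- exact: X_square_integrable.
- exact: y_square_integrable.
Qed.

Lemma Z_square_integrable k : mx_square_integrable P (fun t => Z k t).
Proof.
move=> i j; under eq_fun do rewrite -mulmxA.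
exact: mx_square_integrable_mull (Xy_square_integrable k) i j.
Qed.

Lemma mexpect_X k : mexpect P (X k) = 0.
Proof. by apply/matrixP => i j; rewrite !mxE /Rintegral zX. Qed.

Lemma cross_moment_eq0 (k l : 'I_N) : k != l -> \int[P]_t ((Z k t)^T *m Z l t) 0 0 = 0.
Proof.
wlog kl : k l / (k < l)%N => [wlog_kl|_].
  case: (ltngtP k l) => [kl|lk|/val_inj->]; [exact: wlog_kl| |by rewrite eqxx].
  move=> _; rewrite -(wlog_kl l k lk); last by apply: contraTneq lk => ->; rewrite ltnn.
  by apply: eq_Rintegral => t _; exact: dotmxC.
pose w t := ((F l)^T *m Z k t)^T.
have wZ t : ((Z k t)^T *m Z l t) 0 0 = (w t *m X l t *m y l t) 0 0.
  by rewrite /w /= [((F l)^T *m _)^T]trmx_mul trmxK !mulmxA.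
under eq_Rintegral do rewrite wZ.
have wsq : mx_square_integrable P w.
  by apply: mx_square_integrable_tr; apply: mx_square_integrable_mull; exact: Z_square_integrable.
have wl : mx_sigma_measurable (rest_gen l) w.
  apply: mx_sigma_measurable_tr; apply: mx_sigma_measurable_mul.
    exact: mx_sigma_measurable_cst.
  apply: mx_sigma_measurable_mul; last exact: y_sigma_rest_gen (ltnW kl).
  apply: mx_sigma_measurable_mul; first exact: mx_sigma_measurable_cst.
  by apply: X_sigma_rest_gen; rewrite neq_ltn kl.
rewrite (Rintegral_indep_bilinear (@X_gen_measurable l) (@rest_gen_measurable l) (indep l)
  (@X_sigma_X_gen l) wl (@y_sigma_rest_gen l l (leqnn l))
  (fun i j => square_integrable_integrable (@X_square_integrable l i j)) wsq
  (@y_square_integrable l)).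
by under eq_Rintegral do rewrite mexpect_X mulmx0 mul0mx mxE; rewrite Rintegral_cst// mul0r.
Qed.

Lemma second_moment_sum :
  \int[P]_t vnorm (\sum_k Z k t) ^+ 2 = \sum_k \int[P]_t vnorm (Z k t) ^+ 2.
Proof.
have ZZ k l : Rintegrable P (fun t => ((Z k t)^T *m Z l t) 0 0).
  apply: mx_Rintegrable_mul; last exact: Z_square_integrable.
  by apply: mx_square_integrable_tr; exact: Z_square_integrable.
under eq_Rintegral do rewrite vnorm_sum_sqr.
rewrite (Rintegral_sum _ (fun k => Rintegrable_sum _ (ZZ k))); apply: eq_bigr => k _.
rewrite (Rintegral_sum _ (ZZ k)) (bigD1 k)//= big1 ?addr0 => [|l lk]; last first.
  by rewrite cross_moment_eq0// eq_sym.
by apply: eq_Rintegral => t _; rewrite vnorm_sqr_mx.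
Qed.

Lemma second_moment_Z_le k : \int[P]_t vnorm (Z k t) ^+ 2 <=
  mnorm (F k) ^+ 2 * \int[P]_t vnorm (X k t *m y k t) ^+ 2.
Proof.
have Xy := Rintegrable_sqr_vnorm (Xy_square_integrable k).
rewrite -RintegralZl//; apply: le_Rintegral => //.
- exact: Rintegrable_sqr_vnorm (Z_square_integrable k).
- exact: RintegrableZl.
move=> t _; rewrite -mulmxA -exprMn ler_sqr ?nnegrE ?mulr_ge0 ?vnorm_ge0 ?mnorm_ge0//.
exact: vnorm_mulmx_le.
Qed.

Definition Xmoment k := fine (\int[P]_t (mnorm (X k t) ^+ 2)%:E).

Lemma XmomentE k : (\int[P]_t (mnorm (X k t) ^+ 2)%:E)%E = (Xmoment k)%:E.
Proof.
by rewrite fineK// ge0_fin_numE ?iX// integral_ge0// => t _; rewrite lee_fin sqr_ge0.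
Qed.

Lemma second_moment_mulmx_le k v :
  \int[P]_t vnorm (X k t *m v) ^+ 2 <= Xmoment k * vnorm v ^+ 2.
Proof.
have Xv_int u : Rintegrable P (fun t => vnorm (X k t *m u) ^+ 2).
  by apply: Rintegrable_sqr_vnorm; apply: mx_square_integrable_mulr; exact: X_square_integrable.
have [->|v0] := eqVneq v 0.
  under eq_Rintegral do rewrite mulmx0 vnorm0 expr0n.
  by rewrite vnorm0 expr0n /= mulr0 Rintegral_cst// mul0r.
have vpos : 0 < vnorm v by rewrite lt_def vnorm_eq0 v0 vnorm_ge0.
pose u := (vnorm v)^-1 *: v.
have Xv t : vnorm (X k t *m v) ^+ 2 = vnorm v ^+ 2 * vnorm (X k t *m u) ^+ 2.
  rewrite -scalemxAr vnormZ ger0_norm ?invr_ge0 ?vnorm_ge0// exprMn mulrA -exprMn.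
  by rewrite mulfV ?gt_eqF// expr1n mul1r.
under eq_Rintegral do rewrite Xv.
rewrite RintegralZl// mulrC ler_wpM2r ?sqr_ge0// -lee_fin -Rintegral_EFin// -XmomentE.
apply: ge0_le_integral_nomeas => t; rewrite lee_fin ?sqr_ge0// ler_sqr ?nnegrE ?vnorm_ge0 ?mnorm_ge0//.
by apply: mnorm_ub; rewrite vnormZ ger0_norm ?invr_ge0 ?vnorm_ge0// mulVf ?gt_eqF.
Qed.

Lemma second_moment_Xy_le k : \int[P]_t vnorm (X k t *m y k t) ^+ 2 <=
  Xmoment k * \int[P]_t vnorm (y k t) ^+ 2.
Proof.
have XtX_int i j : Rintegrable P (fun t => ((X k t)^T *m X k t) i j).
  apply: mx_Rintegrable_mul; last exact: X_square_integrable.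
  by apply: mx_square_integrable_tr; exact: X_square_integrable.
have yty : mx_square_integrable P (fun t => (y k t)^T).
  by apply: mx_square_integrable_tr; exact: y_square_integrable.
have XtX_gen : mx_sigma_measurable (X_gen k) (fun t => (X k t)^T *m X k t).
  by apply: mx_sigma_measurable_mul; [apply: mx_sigma_measurable_tr|]; exact: X_sigma_X_gen.
have yt_gen : mx_sigma_measurable (rest_gen k) (fun t => (y k t)^T).
  by apply: mx_sigma_measurable_tr; exact: y_sigma_rest_gen.
under eq_Rintegral do rewrite vnorm_mulmx_sqr.
rewrite (Rintegral_indep_bilinear (@X_gen_measurable k) (@rest_gen_measurable k) (indep k)
  XtX_gen yt_gen (@y_sigma_rest_gen k k (leqnn k)) XtX_int yty (@y_square_integrable k)).
have y2 := Rintegrable_sqr_vnorm (y_square_integrable k).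
rewrite -RintegralZl//; apply: le_Rintegral => //.
- exact: Rintegrable_mx_bilinear yty (@y_square_integrable k).
- exact: RintegrableZl.
move=> t _; rewrite mexpect_bilinear//; under eq_Rintegral do rewrite -vnorm_mulmx_sqr.
exact: second_moment_mulmx_le.
Qed.

End second_moment.

Unset Implicit Arguments.

Theorem lemma6 (d : measure_display) (T : measurableType d) (R : realType)
  (P : probability T R) (N m n : nat)
  (X : 'I_N -> T -> 'M[R]_n) (y : 'I_N -> T -> 'cV[R]_n)
  (F : 'I_N -> 'M[R]_(m, n)) :
  (* measurability (random matrices / vectors) *)
  (forall k i j, measurable_fun setT (fun t => X k t i j)) ->
  (forall k i, measurable_fun setT (fun t => y k t i 0)) ->
  (* bounded second moments *)
  (forall k, (\int[P]_t ((mnorm (X k t)) ^+ 2)%:E < +oo)%E) ->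
  (forall k, (\int[P]_t ((vnorm (y k t)) ^+ 2)%:E < +oo)%E) ->
  (* zero mean *)
  (forall k i j, (\int[P]_t (X k t i j)%:E = 0)%E) ->
  (* X_k is independent of {X_l}_{l <> k} together with {y_l}_{l <= k} *)
  (forall k : 'I_N,
     indep_gen P
       [set A | exists i j, preimg_sets (fun t => X k t i j) A]
       ([set A | exists (l : 'I_N) i j, l != k /\ preimg_sets (fun t => X l t i j) A]
        `|` [set A | exists (l : 'I_N) i, (l <= k)%N /\ preimg_sets (fun t => y l t i 0) A])) ->
  (\int[P]_t ((vnorm (\sum_(k < N) F k *m X k t *m y k t)) ^+ 2)%:E
   <= \sum_(k < N) (((mnorm (F k)) ^+ 2)%:E
                    * (\int[P]_t ((mnorm (X k t)) ^+ 2)%:E)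
                    * (\int[P]_t ((vnorm (y k t)) ^+ 2)%:E)))%E.
Proof.
move=> mX my iX iy zX indep.
have sum_int := Rintegrable_sqr_vnorm
  (mx_square_integrable_sum (index_enum _) (Z_square_integrable F mX my iX iy indep)).
have y_int k := Rintegrable_sqr_vnorm (y_square_integrable my iy k).
rewrite (Rintegral_EFin sum_int) (second_moment_sum F mX my iX iy zX indep) -sumEFin.
apply: lee_sum => k _.
rewrite (XmomentE iX) (Rintegral_EFin (y_int k)) -!EFinM lee_fin -mulrA.
apply: le_trans (second_moment_Z_le F mX my iX iy indep k) _.
by rewrite ler_wpM2l ?sqr_ge0// second_moment_Xy_le.
Qed.
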